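(* There is an absolute constant $C>0$ such that the following holds. Let $U^*,S,p_{ijk},\widehat p_{ijk},\mathcal{W}_{ijk},\delta_{ijk}$ be as in the context, and let $U\in\mathbb{R}^{n\times r}$ be a fixed (non-random, or independent of $\delta$) matrix with unit-norm columns satisfying $|U_{il}|\le2\|(U^* )^i\|$ for all $i,l$. Let $\gamma\in(0,1]$, $i\in[n]$ and $q\in[r]$ be fixed. If $m\ge\frac{C}{\gamma^2}n\log(n)S^2$, then with probability at least $1-n^{-10}$, $$\Big|\sum_{j,k}\delta_{ijk}\mathcal{W}_{ijk}U_{jq}U^*_{jq}U_{kq}U^*_{kq}-\langle U_q,U^*_q\rangle^2\Big|\le\gamma .$$
   Context: $U^*\in\mathbb{R}^{n\times r}$ has orthonormal columns $U^*_l$ and rows $(U^* )^i$; $S=\sum_i\|(U^* )^i\|^{3/2}$; $p_{ijk}=\frac{\|(U^* )^i\|^{3/2}\|(U^* )^j\|^{3/2}+\|(U^* )^j\|^{3/2}\|(U^* )^k\|^{3/2}+\|(U^* )^k\|^{3/2}\|(U^* )^i\|^{3/2}}{3nS^2}$; $\widehat p_{ijk}=\min\{mp_{ijk},1\}$; $\mathcal{W}_{ijk}=1/\widehat p_{ijk}$ if $\widehat p_{ijk}>0$, else $0$; $\delta_{ijk}$ are independent Bernoulli$(\widehat p_{ijk})$ random variables. *)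

From Stdlib Require Import Reals ClassicalEpsilon.
From mathcomp Require Import all_boot.
Set Implicit Arguments. Unset Strict Implicit. Unset Printing Implicit Defensive.

Local Open Scope R_scope.

Definition rsum (T : finType) (F : T -> R) : R := \big[Rplus/0]_(x : T) F x.
Definition rprod (T : finType) (F : T -> R) : R := \big[Rmult/1]_(x : T) F x.

Definition mat (n r : nat) := 'I_n -> 'I_r -> R.

Definition orthonormal_cols n r (A : mat n r) : Prop :=
  forall l l' : 'I_r, rsum (fun i => A i l * A i l') = (if l == l' then 1 else 0).

Definition unit_norm_cols n r (A : mat n r) : Prop :=
  forall l : 'I_r, rsum (fun i => (A i l) ^ 2) = 1.

Definition rownorm n r (A : mat n r) (i : 'I_n) : R := sqrt (rsum (fun l => (A i l) ^ 2)).

Definition pow32 (x : R) : R := x * sqrt x.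

Definition Sval n r (Us : mat n r) : R := rsum (fun i => pow32 (rownorm Us i)).

Definition triple n := ('I_n * 'I_n * 'I_n)%type.

Definition pval n r (Us : mat n r) (t : triple n) : R :=
  let '(i, j, k) := t in
  let a := pow32 (rownorm Us i) in
  let b := pow32 (rownorm Us j) in
  let c := pow32 (rownorm Us k) in
  (a * b + b * c + c * a) / (3 * INR n * (Sval Us) ^ 2).

Definition phat n r (Us : mat n r) (m : R) (t : triple n) : R :=
  Rmin (m * pval Us t) 1.

Definition Wt n r (Us : mat n r) (m : R) (t : triple n) : R :=
  if Rlt_dec 0 (phat Us m t) then / phat Us m t else 0.

(* Outcome space of (delta_{ijk}): all boolean functions on triples.
   Independent Bernoulli(phat) law: product weights. *)
Definition outcome n := {ffun triple n -> bool}.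

Definition bern_weight n r (Us : mat n r) (m : R) (d : outcome n) : R :=
  rprod (fun t : triple n => if d t then phat Us m t else 1 - phat Us m t).

Definition Prob n r (Us : mat n r) (m : R) (E : outcome n -> Prop) : R :=
  rsum (fun d : outcome n =>
          if excluded_middle_informative (E d) then bern_weight Us m d else 0).

Definition b2R (b : bool) : R := if b then 1 else 0.

Definition rand_sum n r (Us U : mat n r) (m : R) (i : 'I_n) (q : 'I_r) (d : outcome n) : R :=
  rsum (fun j : 'I_n => rsum (fun k : 'I_n =>
    b2R (d (i, j, k)) * Wt Us m (i, j, k) * U j q * Us j q * U k q * Us k q)).

Definition col_inner n r (U Us : mat n r) (q : 'I_r) : R := rsum (fun j => U j q * Us j q).

From Stdlib Require Import Reals ClassicalEpsilon Lra.
From HB Require Import structures.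
From mathcomp Require Import all_boot.
Set Implicit Arguments. Unset Strict Implicit.
Local Open Scope R_scope.

(* Subtracting the mean, the random sum is a sum over (j, k) of independent
   centred terms (delta_ijk / p_ijk - 1) c_jk, with c_jk = U_jq Us_jq U_kq Us_kq
   where Us stands for U^* .  Incoherence gives
   |U_jq Us_jq| <= 2 |row_j Us|^{3/2}, hence
   |c_jk| <= A * (m p_ijk) with A = 12 n S^2 / m: every term is small compared
   with its sampling probability.  This yields the Bernstein-type moment bound
   E exp(s Y_jk) <= exp(2 lam^2 A |c_jk|) for |s| <= lam, lam A <= 1/2, while
   sum_jk |c_jk| = (sum_j |U_jq Us_jq|)^2 <= 1 by AM-GM.  A two-sided Chernoff
   bound with lam = gamma / (4 A) then gives the tail
   2 exp(-gamma^2 m / (96 n S^2)), which is at most n^-10 as soon as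
   m >= 1152 n ln(n) S^2 / gamma^2. *)

HB.instance Definition _ := Monoid.isComLaw.Build R 0 Rplus
  (fun x y z => esym (Rplus_assoc x y z)) Rplus_comm Rplus_0_l.
HB.instance Definition _ := Monoid.isComLaw.Build R 1 Rmult
  (fun x y z => esym (Rmult_assoc x y z)) Rmult_comm Rmult_1_l.
HB.instance Definition _ := Monoid.isMulLaw.Build R 0 Rmult Rmult_0_l Rmult_0_r.
HB.instance Definition _ :=
  Monoid.isAddLaw.Build R Rmult Rplus Rmult_plus_distr_r Rmult_plus_distr_l.

Lemma exp_le (x y : R) : x <= y -> exp x <= exp y.
Proof.
by case/Rle_lt_or_eq_dec => [/exp_increasing/Rlt_le | ->] //; apply: Rle_refl.
Qed.

Section RealSums.

Variable T : finType.
Implicit Types (F G : T -> R).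

Lemma eq_rsum F G : (forall x, F x = G x) -> rsum F = rsum G.
Proof. by move=> FG; apply: eq_bigr => x _. Qed.

Lemma rsum_le F G : (forall x, F x <= G x) -> rsum F <= rsum G.
Proof.
move=> FG; apply: (big_ind2 (fun a b => a <= b)) => //; first exact: Rle_refl.
by move=> *; apply: Rplus_le_compat.
Qed.

Lemma rsum0 : rsum (fun _ : T => 0) = 0.
Proof. by rewrite /rsum big1. Qed.

Lemma rsum_ge0 F : (forall x, 0 <= F x) -> 0 <= rsum F.
Proof. by move=> F0; rewrite -rsum0; apply: rsum_le. Qed.

Lemma rsumD F G : rsum (fun x => F x + G x) = rsum F + rsum G.
Proof. by rewrite /rsum big_split. Qed.

Lemma rsumZl a F : rsum (fun x => a * F x) = a * rsum F.
Proof. by rewrite /rsum big_distrr. Qed.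

Lemma rsumZr a F : rsum (fun x => F x * a) = rsum F * a.
Proof. by rewrite /rsum big_distrl. Qed.

Lemma rsumB F G : rsum (fun x => F x - G x) = rsum F - rsum G.
Proof.
rewrite (@eq_rsum _ (fun x => F x + -1 * G x)) => [|x]; last ring.
by rewrite rsumD rsumZl; ring.
Qed.

Lemma rsum_delta F (i : T) : rsum (fun x => if x == i then F x else 0) = F i.
Proof. by rewrite /rsum (bigD1 i) //= eqxx big1 ?Rplus_0_r // => x /negbTE ->. Qed.

Lemma term_le_rsum F (i : T) : (forall x, 0 <= F x) -> F i <= rsum F.
Proof.
move=> F0; rewrite /rsum (bigD1 i) //=.
have : 0 <= \big[Rplus/0]_(x | x != i) F x.
  by apply: (big_ind (fun a => 0 <= a)) => *; [lra | lra | apply: F0].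
lra.
Qed.

Lemma rprod1 : rprod (fun _ : T => 1) = 1.
Proof. by rewrite /rprod big1. Qed.

Lemma rprod_le F G : (forall x, 0 <= F x <= G x) -> 0 <= rprod F <= rprod G.
Proof.
move=> FG; apply: (big_ind2 (fun a b => 0 <= a <= b)) => //; first lra.
move=> a b c d [a0 ab] [c0 cd]; split; first exact: Rmult_le_pos.
exact: Rmult_le_compat.
Qed.

Lemma exp_rsum F : exp (rsum F) = rprod (fun x => exp (F x)).
Proof. by rewrite /rsum /rprod (big_morph exp exp_plus exp_0). Qed.

End RealSums.

Lemma rsum_triple n (F : triple n -> R) :
  rsum F = rsum (fun i => rsum (fun j => rsum (fun k => F (i, j, k)))).
Proof.
rewrite /rsum.
transitivity (\big[Rplus/0]_(ij : 'I_n * 'I_n) \big[Rplus/0]_(k : 'I_n) F (ij, k)).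
  rewrite (pair_bigA _ (fun ij k => F (ij, k))).
  by apply: (@eq_bigr R 0 Rplus (('I_n * 'I_n) * 'I_n)%type) => [[ij k]] _.
rewrite (pair_bigA _ (fun i j => \big[Rplus/0]_(k : 'I_n) F (i, j, k))).
by apply: (@eq_bigr R 0 Rplus ('I_n * 'I_n)%type) => [[i j]] _.
Qed.

Lemma rsum_triple_fst n (i : 'I_n) (F : 'I_n -> 'I_n -> 'I_n -> R) :
  rsum (fun t : triple n => let '(i', j, k) := t in if i' == i then F i' j k else 0)
  = rsum (fun j => rsum (fun k => F i j k)).
Proof.
rewrite rsum_triple.
rewrite (@eq_rsum _ _ (fun i' =>
  if i' == i then rsum (fun j => rsum (fun k => F i' j k)) else 0)).
  by rewrite rsum_delta.
move=> i'; case: eqP => _ //.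
by rewrite (@eq_rsum _ _ (fun _ => 0)) ?rsum0 // => j; rewrite rsum0.
Qed.

Definition bern_mgf (p : R) (Y : bool -> R) (s : R) : R :=
  p * exp (s * Y true) + (1 - p) * exp (s * Y false).

Section ProductBernoulli.

Variables (T : finType) (ph : T -> R).

Definition prod_bern (d : {ffun T -> bool}) : R :=
  rprod (fun t => if d t then ph t else 1 - ph t).

Definition expect (F : {ffun T -> bool} -> R) : R :=
  rsum (fun d => prod_bern d * F d).

Definition prob (E : {ffun T -> bool} -> Prop) : R :=
  rsum (fun d => if excluded_middle_informative (E d) then prod_bern d else 0).

Lemma expect_prod (g : T -> bool -> R) :
  expect (fun d => rprod (fun t => g t (d t)))
  = rprod (fun t => ph t * g t true + (1 - ph t) * g t false).
Proof.
rewrite /expect /rsum /rprod.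
have -> : \big[Rmult/1]_t (ph t * g t true + (1 - ph t) * g t false)
   = \big[Rmult/1]_t \big[Rplus/0]_(b : bool) ((if b then ph t else 1 - ph t) * g t b).
  by apply: eq_bigr => t _; rewrite big_bool /= Rplus_comm.
by rewrite bigA_distr_bigA; apply: eq_bigr => d _; rewrite -big_split.
Qed.

Lemma prod_bern_sum : rsum prod_bern = 1.
Proof.
have := expect_prod (fun _ _ => 1); rewrite /expect rprod1.
under eq_rsum do rewrite Rmult_1_r.
move=> ->; rewrite -[RHS](rprod1 T); apply: eq_bigr => t _; ring.
Qed.

Lemma prob_ext (E F : {ffun T -> bool} -> Prop) :
  (forall d, E d <-> F d) -> prob E = prob F.
Proof.
move=> EF; apply: eq_rsum => d.
case: excluded_middle_informative => [e|ne];
  case: excluded_middle_informative => [e'|ne'] //.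
- by case: ne'; apply/EF.
- by case: ne; apply/EF.
Qed.

Lemma prob_compl (E : {ffun T -> bool} -> Prop) : prob E = 1 - prob (fun d => ~ E d).
Proof.
rewrite -prod_bern_sum /prob -rsumB; apply: eq_rsum => d.
by do 2 case: excluded_middle_informative => //= *; ring.
Qed.

Hypothesis ph01 : forall t, 0 <= ph t <= 1.

Lemma prod_bern_ge0 d : 0 <= prod_bern d.
Proof.
set F := fun t => if d t then ph t else 1 - ph t.
by apply: (proj1 (@rprod_le _ F F _)) => t; rewrite /F; case: (d t); have := ph01 t; lra.
Qed.

Lemma prob_ge0 E : 0 <= prob E.
Proof.
apply: rsum_ge0 => d; case: excluded_middle_informative => e; last exact: Rle_refl.
exact: prod_bern_ge0.
Qed.

Lemma prob_le_expect (E : {ffun T -> bool} -> Prop) (F : {ffun T -> bool} -> R) :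
  (forall d, 0 <= F d) -> (forall d, E d -> 1 <= F d) -> prob E <= expect F.
Proof.
move=> F0 EF; apply: rsum_le => d; have w0 := prod_bern_ge0 d.
case: excluded_middle_informative => [e|e] /=; last exact: Rmult_le_pos.
by have F1 := EF d e; have := Rmult_le_compat_l _ _ _ w0 F1; lra.
Qed.

Lemma expect_mgf_le (Y : T -> bool -> R) (v : T -> R) (s : R) :
  (forall t, bern_mgf (ph t) (Y t) s <= exp (v t)) ->
  expect (fun d => exp (s * rsum (fun t => Y t (d t)))) <= exp (rsum v).
Proof.
move=> Yv.
have -> : expect (fun d => exp (s * rsum (fun t => Y t (d t))))
        = expect (fun d => rprod (fun t => exp (s * Y t (d t)))).
  by apply: eq_rsum => d; rewrite -rsumZl exp_rsum.
rewrite (expect_prod (fun t b => exp (s * Y t b))) exp_rsum.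
apply: (proj2 (rprod_le (G := fun t => exp (v t)) _)) => t; split; last exact: Yv.
have := ph01 t; have := exp_pos (s * Y t true); have := exp_pos (s * Y t false).
by move=> *; apply: Rplus_le_le_0_compat; apply: Rmult_le_pos; lra.
Qed.

Lemma chernoff_two_sided (Y : T -> bool -> R) (v : T -> R) (lam g : R) :
  0 < lam ->
  (forall s t, Rabs s <= lam -> bern_mgf (ph t) (Y t) s <= exp (v t)) ->
  prob (fun d => g < Rabs (rsum (fun t => Y t (d t))))
  <= 2 * exp (- lam * g + rsum v).
Proof.
move=> lam0 Yv; set X := fun d => rsum (fun t => Y t (d t)).
apply: (Rle_trans _ (expect (fun d =>
  exp (- lam * g) * exp (lam * X d) + exp (- lam * g) * exp (- lam * X d)))).
  apply: prob_le_expect => d.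
    by have := exp_pos (- lam * g); have := exp_pos (lam * X d);
       have := exp_pos (- lam * X d); nra.
  rewrite -!exp_plus => gX; change (g < Rabs (X d)) in gX.
  have [Xg|Xg] : 0 < lam * (X d - g) \/ 0 < lam * (- X d - g).
    by move: gX; rewrite /Rabs; case: Rcase_abs => _ ?; [right|left];
       apply: Rmult_lt_0_compat; lra.
  - rewrite (_ : - lam * g + lam * X d = lam * (X d - g)); last ring.
    by have := exp_ineq1_le (lam * (X d - g)); have := exp_pos (- lam * g + - lam * X d); lra.
  - rewrite (_ : - lam * g + - lam * X d = lam * (- X d - g)); last ring.
    by have := exp_ineq1_le (lam * (- X d - g)); have := exp_pos (- lam * g + lam * X d); lra.
rewrite /expect.
under eq_rsum do rewrite Rmult_plus_distr_l -!Rmult_assoc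
  ![_ * exp (- lam * g)]Rmult_comm !Rmult_assoc.
rewrite rsumD !rsumZl exp_plus.
have Mp := expect_mgf_le (s := lam) (fun t => Yv lam t ltac:(rewrite Rabs_right; lra)).
have Mm := expect_mgf_le (s := - lam)
  (fun t => Yv (- lam) t ltac:(rewrite Rabs_Ropp Rabs_right; lra)).
have e0 := Rlt_le _ _ (exp_pos (- lam * g)).
have := Rmult_le_compat_l _ _ _ e0 Mp; have := Rmult_le_compat_l _ _ _ e0 Mm.
by rewrite /expect /X; lra.
Qed.

End ProductBernoulli.

Lemma exp_le_quadratic (y : R) : y <= 1 / 2 -> exp y <= 1 + y + 2 * y ^ 2.
Proof.
move=> y_le.
have e_inv : exp y * exp (- y) = 1 by rewrite -exp_plus Rplus_opp_r exp_0.
have ey := exp_pos y; have emy := exp_ineq1_le (- y).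
have ey_1y : exp y * (1 - y) <= 1.
  by rewrite -e_inv; apply: Rmult_le_compat_l; lra.
have : 0 <= y ^ 2 * (1 - 2 * y) by apply: Rmult_le_pos; [nra | lra].
nra.
Qed.

Lemma inverse_weight_mgf (p c s : R) :
  0 < p <= 1 -> Rabs (s * c) <= p / 2 ->
  bern_mgf p (fun b => (b2R b / p - 1) * c) s <= exp (2 * s ^ 2 * c ^ 2 / p).
Proof.
move=> [p0 p1]; set u := s * c => u_le.
have [u_lo u_hi] : - (p / 2) <= u <= p / 2.
  by move: u_le; rewrite /Rabs; case: Rcase_abs => ? ?; lra.
rewrite /bern_mgf /= (_ : s * ((1 / p - 1) * c) = u * (1 - p) / p);
  last by rewrite /u; field; lra.
rewrite (_ : s * ((0 / p - 1) * c) = - u); last by rewrite /u; field; lra.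
rewrite (_ : 2 * s ^ 2 * c ^ 2 / p = 2 * u ^ 2 / p); last by rewrite /u; field; lra.
have up_le : u * (1 - p) / p <= 1 / 2.
  apply: (Rmult_le_reg_r p) => //.
  rewrite (_ : u * (1 - p) / p * p = u * (1 - p)); last by field; lra.
  nra.
have u2p : 0 <= 2 * u ^ 2 / p.
  by apply: Rmult_le_pos; [nra | apply: Rlt_le; apply: Rinv_0_lt_compat].
apply: (Rle_trans _ (1 + 2 * u ^ 2 / p)); last by have := exp_ineq1_le (2 * u ^ 2 / p); lra.
apply: (Rle_trans _ (p * (1 + u * (1 - p) / p + 2 * (u * (1 - p) / p) ^ 2)
                    + (1 - p) * (1 + - u + 2 * (- u) ^ 2))).
  apply: Rplus_le_compat; apply: Rmult_le_compat_l; try lra; apply: exp_le_quadratic; lra.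
rewrite (_ : p * (1 + u * (1 - p) / p + 2 * (u * (1 - p) / p) ^ 2)
  + (1 - p) * (1 + - u + 2 * (- u) ^ 2) = 1 + 2 * u ^ 2 / p * (1 - p)); last by field; lra.
nra.
Qed.

Lemma sampled_term_mgf (P A c s lam : R) :
  0 <= P -> 0 <= A -> Rabs c <= A * P -> Rabs s <= lam -> lam * A <= 1 / 2 ->
  let p := Rmin P 1 in
  bern_mgf p (fun b => (b2R b * (if Rlt_dec 0 p then / p else 0) - 1) * c) s
  <= exp (2 * lam ^ 2 * A * Rabs c).
Proof.
move=> P0 A0 cP s_lam lamA p.
have sA : Rabs s * A <= 1 / 2.
  by have := Rmult_le_compat_r _ _ _ A0 s_lam; lra.
have s2 : s ^ 2 <= lam ^ 2.
  by rewrite -(pow2_abs s); have := Rabs_pos s; nra.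
have v0 : 0 <= 2 * lam ^ 2 * A * Rabs c.
  by apply: Rmult_le_pos; [have := pow2_ge_0 lam; nra | exact: Rabs_pos].
have ev := exp_ineq1_le (2 * lam ^ 2 * A * Rabs c).
have [P1|P1] := Rle_lt_dec 1 P.
  rewrite /p Rmin_right //; case: Rlt_dec => [p_pos|p_npos]; last by exfalso; lra.
  cbv [is_left].
  rewrite /bern_mgf Rinv_1 (_ : (b2R true * 1 - 1) * c = 0); last by rewrite /b2R; ring.
  by rewrite Rmult_0_r exp_0; lra.
rewrite /p Rmin_left; last lra.
have [Ppos|P_0] := Rle_lt_or_eq_dec _ _ P0; last first.
  have c0 : c = 0.
    by move: cP; rewrite -P_0 Rmult_0_r /Rabs; case: Rcase_abs => ? ?; lra.
  by rewrite /bern_mgf c0 Rabs_R0 !Rmult_0_r exp_0; lra.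
case: Rlt_dec => [p_pos|p_npos]; last by exfalso; lra.
cbv [is_left].
apply: Rle_trans (inverse_weight_mgf (conj Ppos (Rlt_le _ _ P1)) _) _.
  rewrite Rabs_mult.
  have := Rmult_le_compat _ _ _ _ (Rabs_pos s) (Rabs_pos c) (Rle_refl _) cP.
  have := Rmult_le_compat_r P _ _ (Rlt_le _ _ Ppos) sA.
  lra.
apply: exp_le.
have c2 : c ^ 2 / P <= A * Rabs c.
  apply: (Rmult_le_reg_r P) => //.
  rewrite (_ : c ^ 2 / P * P = Rabs c * Rabs c); last by rewrite -(pow2_abs c); field; lra.
  by have := Rmult_le_compat_l _ _ _ (Rabs_pos c) cP; lra.
rewrite (_ : 2 * s ^ 2 * c ^ 2 / P = 2 * s ^ 2 * (c ^ 2 / P)); last by field; lra.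
have c2P : 0 <= c ^ 2 / P.
  by apply: Rmult_le_pos; [nra | apply: Rlt_le; apply: Rinv_0_lt_compat].
have := pow2_ge_0 s; have := Rabs_pos c; nra.
Qed.

Section Incoherence.

Variables (n r : nat) (Us U : mat n r).

Lemma rownorm_ge0 j : 0 <= rownorm Us j.
Proof. exact: sqrt_pos. Qed.

Lemma pow32_rownorm_ge0 j : 0 <= pow32 (rownorm Us j).
Proof. by apply: Rmult_le_pos; [exact: rownorm_ge0 | exact: sqrt_pos]. Qed.

Lemma abs_le_rownorm j l : Rabs (Us j l) <= rownorm Us j.
Proof.
rewrite /rownorm -sqrt_Rsqr_abs; apply: sqrt_le_1_alt.
rewrite /Rsqr (_ : Us j l * Us j l = Us j l ^ 2); last ring.
by apply: (term_le_rsum (F := fun l => Us j l ^ 2)) => x; nra.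
Qed.

Lemma orthonormal_cols_unit : orthonormal_cols Us -> unit_norm_cols Us.
Proof.
by move=> HUs l; have := HUs l l; rewrite eqxx => <-; apply: eq_rsum => j; ring.
Qed.

Lemma unit_col_abs_le1 (A : mat n r) j l : unit_norm_cols A -> Rabs (A j l) <= 1.
Proof.
move=> HA; have : A j l ^ 2 <= 1.
  by rewrite -(HA l); apply: (term_le_rsum (F := fun i => A i l ^ 2)) => x; nra.
by have := pow2_abs (A j l); have := Rabs_pos (A j l); nra.
Qed.

Lemma Sval_pos (q : 'I_r) : orthonormal_cols Us -> 0 < Sval Us.
Proof.
move=> HUs; have S0 : 0 <= Sval Us by apply: rsum_ge0 => j; apply: pow32_rownorm_ge0.
case: (Rle_lt_or_eq_dec _ _ S0) => // S_0; exfalso.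
have col0 j : Us j q = 0.
  have pow0 : pow32 (rownorm Us j) = 0.
    have := pow32_rownorm_ge0 j.
    have := term_le_rsum (F := fun i => pow32 (rownorm Us i)) j pow32_rownorm_ge0.
    by rewrite -/(Sval Us); lra.
  have rho0 : rownorm Us j = 0.
    by case/Rmult_integral: pow0 => // /sqrt_eq_0; apply; exact: rownorm_ge0.
  by have := abs_le_rownorm j q; rewrite rho0 /Rabs; case: Rcase_abs => ? ?; lra.
have := orthonormal_cols_unit HUs q.
by rewrite (@eq_rsum _ _ (fun _ => 0)) ?rsum0 => [|j]; [lra | rewrite col0; ring].
Qed.

(* The incoherence hypothesis only enters here: both factors are controlled by
   the row norm, and [Rabs (Us j q) <= 1] turns one factor into a square root. *)
Lemma colprod_abs_le (q : 'I_r) j :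
  orthonormal_cols Us ->
  (forall (i' : 'I_n) (l : 'I_r), Rabs (U i' l) <= 2 * rownorm Us i') ->
  Rabs (U j q * Us j q) <= 2 * pow32 (rownorm Us j).
Proof.
move=> HUs HUinc; set x := rownorm Us j.
have Us1 := unit_col_abs_le1 j q (orthonormal_cols_unit HUs).
have Usx : Rabs (Us j q) <= x := abs_le_rownorm j q.
have Us_sqrt : Rabs (Us j q) <= sqrt x.
  rewrite -(sqrt_pow2 (Rabs (Us j q))); last exact: Rabs_pos.
  by apply: sqrt_le_1_alt; have := Rabs_pos (Us j q); nra.
rewrite Rabs_mult /pow32.
have := Rmult_le_compat _ _ _ _ (Rabs_pos (U j q)) (Rabs_pos (Us j q)) (HUinc j q) Us_sqrt.
by rewrite -/x; lra.
Qed.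

Lemma pval_ge0 (t : triple n) : 0 <= pval Us t.
Proof.
case: t => [[i j] k]; rewrite /pval.
have hi := pow32_rownorm_ge0 i; have hj := pow32_rownorm_ge0 j.
have hk := pow32_rownorm_ge0 k.
apply: Rmult_le_pos; first by nra.
have D0 : 0 <= 3 * INR n * Sval Us ^ 2.
  by apply: Rmult_le_pos; [have := pos_INR n; lra | apply: pow2_ge_0].
case: (Rle_lt_or_eq_dec _ _ D0) => [D_pos|<-]; last by rewrite Rinv_0; lra.
by apply: Rlt_le; apply: Rinv_0_lt_compat.
Qed.

Lemma phat_bounds (m : R) (t : triple n) : 0 <= m -> 0 <= phat Us m t <= 1.
Proof.
move=> m0; split; last exact: Rmin_r.
by apply: Rmin_glb; [apply: Rmult_le_pos => //; exact: pval_ge0 | lra].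
Qed.

End Incoherence.

Lemma INR_ord_gt0 n (i : 'I_n) : 0 < INR n.
Proof. by apply: lt_0_INR; apply/ltP; exact: leq_ltn_trans (ltn_ord i). Qed.

Lemma rsum_abs_mul_le1 n (u v : 'I_n -> R) :
  rsum (fun j => u j ^ 2) = 1 -> rsum (fun j => v j ^ 2) = 1 ->
  rsum (fun j => Rabs (u j * v j)) <= 1.
Proof.
move=> u1 v1.
apply: (Rle_trans _ (rsum (fun j => / 2 * u j ^ 2 + / 2 * v j ^ 2))).
  apply: rsum_le => j; rewrite Rabs_mult -(pow2_abs (u j)) -(pow2_abs (v j)).
  by have := pow2_ge_0 (Rabs (u j) - Rabs (v j)); lra.
by rewrite rsumD !rsumZl u1 v1; lra.
Qed.

Section Summands.

Variables (n r : nat) (Us U : mat n r) (m : R) (i : 'I_n) (q : 'I_r).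

Definition colprod (j : 'I_n) : R := U j q * Us j q.

(* Only triples with first index [i] enter [rand_sum]; the others get the zero
   summand, so that the Chernoff bound can run over the whole outcome space. *)
Definition summand (t : triple n) (b : bool) : R :=
  let '(i', j, k) := t in
  if i' == i then (b2R b * Wt Us m (i', j, k) - 1) * (colprod j * colprod k) else 0.

Definition summand_scale : R := 12 * (INR n * Sval Us ^ 2 / m).

Definition var_proxy (lam : R) (t : triple n) : R :=
  let '(i', j, k) := t in
  if i' == i then 2 * lam ^ 2 * summand_scale * Rabs (colprod j * colprod k) else 0.

Lemma rsum_summand (d : outcome n) :
  rsum (fun t => summand t (d t)) = rand_sum Us U m i q d - col_inner U Us q ^ 2.
Proof.
pose F i' j k := (b2R (d (i', j, k)) * Wt Us m (i', j, k) - 1) * (colprod j * colprod k).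
rewrite (@eq_rsum _ _ (fun t => let '(i', j, k) := t in if i' == i then F i' j k else 0));
  last by case=> [[i' j] k].
rewrite rsum_triple_fst /F.
rewrite (@eq_rsum _ _ (fun j => rsum (fun k =>
      b2R (d (i, j, k)) * Wt Us m (i, j, k) * (colprod j * colprod k))
    - colprod j * rsum colprod)); last first.
  by move=> j; rewrite -rsumZl -rsumB; apply: eq_rsum => k /=; ring.
have -> : col_inner U Us q = rsum colprod by [].
rewrite rsumB rsumZr /rand_sum; congr (_ - _); last ring.
by apply: eq_rsum => j; apply: eq_rsum => k; rewrite /colprod !Rmult_assoc.
Qed.

Hypotheses (HUs : orthonormal_cols Us) (HU : unit_norm_cols U)
  (HUinc : forall (i' : 'I_n) (l : 'I_r), Rabs (U i' l) <= 2 * rownorm Us i')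
  (m_pos : 0 < m).

Lemma summand_scale_gt0 : 0 < summand_scale.
Proof.
apply: Rmult_lt_0_compat; first lra.
apply: Rmult_lt_0_compat; last exact: Rinv_0_lt_compat.
by apply: Rmult_lt_0_compat; [exact: INR_ord_gt0 i | apply: pow_lt; exact: Sval_pos].
Qed.

Lemma colprod_pair_abs_le j k :
  Rabs (colprod j * colprod k)
  <= summand_scale * (m * pval Us (i, j, k)).
Proof.
have S0 := Sval_pos q HUs; have n0 := INR_ord_gt0 i.
rewrite /summand_scale /pval; set ai := pow32 _; set aj := pow32 _; set ak := pow32 _.
have hi : 0 <= ai := pow32_rownorm_ge0 Us i.
have hj : 0 <= aj := pow32_rownorm_ge0 Us j.
have hk : 0 <= ak := pow32_rownorm_ge0 Us k.
rewrite (_ : 12 * (INR n * Sval Us ^ 2 / m) *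
   (m * ((ai * aj + aj * ak + ak * ai) / (3 * INR n * Sval Us ^ 2)))
   = 4 * (ai * aj + aj * ak + ak * ai)); last by field; repeat split; lra.
rewrite Rabs_mult.
have := Rmult_le_compat _ _ _ _ (Rabs_pos _) (Rabs_pos _)
  (colprod_abs_le q j HUs HUinc) (colprod_abs_le q k HUs HUinc).
rewrite -/aj -/ak /colprod.
by have := Rmult_le_pos _ _ hi hj; have := Rmult_le_pos _ _ hk hi; lra.
Qed.

Lemma summand_mgf (lam s : R) (t : triple n) :
  Rabs s <= lam -> lam * summand_scale <= 1 / 2 ->
  bern_mgf (phat Us m t) (summand t) s <= exp (var_proxy lam t).
Proof.
move=> s_lam lamA; case: t => [[i' j] k]; rewrite /summand /var_proxy.
case: eqP => [->|_]; last by rewrite /bern_mgf !Rmult_0_r exp_0; lra.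
apply: sampled_term_mgf s_lam lamA.
- by apply: Rmult_le_pos; [lra | exact: pval_ge0].
- exact: Rlt_le summand_scale_gt0.
- exact: colprod_pair_abs_le.
Qed.

Lemma rsum_var_proxy_le (lam : R) :
  rsum (var_proxy lam) <= 2 * lam ^ 2 * summand_scale.
Proof.
set C := 2 * lam ^ 2 * summand_scale.
rewrite (rsum_triple_fst i (fun _ j k => C * Rabs (colprod j * colprod k))).
have -> : rsum (fun j => rsum (fun k => C * Rabs (colprod j * colprod k)))
        = C * (rsum (fun j => Rabs (colprod j)) * rsum (fun k => Rabs (colprod k))).
  rewrite -rsumZr -rsumZl; apply: eq_rsum => j.
  by rewrite -!rsumZl; apply: eq_rsum => k; rewrite Rabs_mult; ring.
have C0 : 0 <= C.
  by have := summand_scale_gt0; have := pow2_ge_0 lam; rewrite /C; nra.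
have sum1 : rsum (fun j => Rabs (colprod j)) <= 1.
  apply: rsum_abs_mul_le1 (HU q) _.
  by have := orthonormal_cols_unit HUs q.
have S0 := rsum_ge0 (fun j => Rabs_pos (colprod j)).
have := Rmult_le_compat_l _ _ _ C0 (Rmult_le_compat _ _ _ _ S0 S0 sum1 sum1); lra.
Qed.

End Summands.

Lemma ProbE n r (Us : mat n r) (m : R) (E : outcome n -> Prop) :
  Prob Us m E = prob (phat Us m) E.
Proof. by []. Qed.

Lemma rand_sum_tail n r (Us U : mat n r) (m gamma : R) (i : 'I_n) (q : 'I_r) :
  orthonormal_cols Us -> unit_norm_cols U ->
  (forall (i' : 'I_n) (l : 'I_r), Rabs (U i' l) <= 2 * rownorm Us i') ->
  0 < m -> 0 < gamma <= 2 ->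
  prob (phat Us m) (fun d => gamma < Rabs (rand_sum Us U m i q d - col_inner U Us q ^ 2))
  <= 2 * exp (- (gamma ^ 2 * m / (96 * INR n * Sval Us ^ 2))).
Proof.
move=> HUs HU HUinc m0 [g0 g2].
have S0 := Sval_pos q HUs; have n0 := INR_ord_gt0 i.
set A := summand_scale Us m.
have A0 : 0 < A := summand_scale_gt0 i q HUs m0.
(* The Chernoff parameter minimising [- lam * gamma + 2 * lam ^ 2 * A]; it is
   admissible ([lam * A <= 1/2]) exactly when [gamma <= 2]. *)
set lam := gamma / (4 * A).
have lam0 : 0 < lam by apply: Rdiv_lt_0_compat; lra.
have lamA : lam * A <= 1 / 2 by rewrite /lam; field_simplify; lra.
rewrite (@prob_ext _ _ _ (fun d =>
  gamma < Rabs (rsum (fun t => summand Us U m i q t (d t))))); last first.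
  by move=> d; rewrite rsum_summand.
apply: Rle_trans (chernoff_two_sided (fun t => phat_bounds Us t (Rlt_le _ _ m0)) gamma lam0
  (fun s t s_lam => summand_mgf i q HUs HUinc m0 t s_lam lamA)) _.
apply: Rmult_le_compat_l; first lra.
apply: exp_le.
have := rsum_var_proxy_le i q HUs HU m0 lam; rewrite -/A.
rewrite (_ : - (gamma ^ 2 * m / (96 * INR n * Sval Us ^ 2))
           = - lam * gamma + 2 * lam ^ 2 * A); first lra.
by rewrite /lam /A /summand_scale; field; repeat split; lra.
Qed.

Lemma two_exp_neg_12ln_le (x : R) : 2 <= x -> 2 * exp (- (12 * ln x)) <= / x ^ 10.
Proof.
move=> x2; have x0 : 0 < x by lra.
rewrite exp_Ropp (_ : 12 * ln x = ln (x ^ 12)); last by rewrite ln_pow //=; lra.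
rewrite exp_ln; last exact: pow_lt.
have x10 : 0 < / x ^ 10 by apply: Rinv_0_lt_compat; apply: pow_lt.
rewrite (_ : x ^ 12 = x ^ 10 * x ^ 2); last ring.
rewrite Rinv_mult.
have : / x ^ 2 <= / 4 by apply: Rinv_le_contravar; [lra | nra].
nra.
Qed.

Lemma sample_size_bound (x S m gamma : R) :
  2 <= x -> 0 < S -> 0 < gamma ->
  m >= 1152 / gamma ^ 2 * x * ln x * S ^ 2 ->
  0 < m /\ 12 * ln x <= gamma ^ 2 * m / (96 * x * S ^ 2).
Proof.
move=> x2 S0 g0 hm.
have ln0 : 0 < ln x by rewrite -ln_1; apply: ln_increasing; lra.
have S2 : 0 < S ^ 2 by apply: pow_lt.
have g2 : 0 < gamma ^ 2 by apply: pow_lt.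
set X := 1152 * x * ln x * S ^ 2.
have X0 : 0 < X by rewrite /X; repeat apply: Rmult_lt_0_compat => //; lra.
have mX : X <= gamma ^ 2 * m.
  rewrite (_ : X = gamma ^ 2 * (1152 / gamma ^ 2 * x * ln x * S ^ 2)).
    by apply: Rmult_le_compat_l; lra.
  by rewrite /X; field; lra.
split; first by nra.
rewrite (_ : 12 * ln x = X / (96 * x * S ^ 2)); last by rewrite /X; field; lra.
apply: Rmult_le_compat_r => //; apply: Rlt_le; apply: Rinv_0_lt_compat.
by apply: Rmult_lt_0_compat => //; lra.
Qed.

Theorem mainTheorem5 :
  exists C : R, 0 < C /\
  forall (n r : nat) (Us U : mat n r) (m gamma : R) (i : 'I_n) (q : 'I_r),
    orthonormal_cols Us ->
    unit_norm_cols U ->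
    (forall (i' : 'I_n) (l : 'I_r), Rabs (U i' l) <= 2 * rownorm Us i') ->
    0 < gamma -> gamma <= 1 ->
    m >= C / gamma ^ 2 * INR n * ln (INR n) * (Sval Us) ^ 2 ->
    Prob Us m (fun d => Rabs (rand_sum Us U m i q d - (col_inner U Us q) ^ 2) <= gamma)
      >= 1 - / (INR n ^ 10).
Proof.
exists 1152; split; first lra.
move=> n r Us U m gamma i q HUs HU HUinc g0 g1 hm.
have [n_le1|n_gt1] := leqP n 1.
  (* for n = 1 the claimed lower bound 1 - / n ^ 10 is 0 *)
  have n1 : INR n = 1.
    rewrite (_ : n = 1%N) //; apply/eqP.
    by rewrite eqn_leq n_le1 (leq_ltn_trans _ (ltn_ord i)).
  have m0 : 0 <= m by move: hm; rewrite n1 ln_1 Rmult_0_r Rmult_0_l; lra.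
  rewrite n1 pow1 Rinv_1 (_ : 1 - 1 = 0); last ring.
  by apply: Rle_ge; rewrite ProbE; apply: prob_ge0 => t; exact: phat_bounds.
have n2 : 2 <= INR n by apply: (le_INR 2); apply/leP.
have [m0 m_lb] := sample_size_bound n2 (Sval_pos q HUs) g0 hm.
rewrite ProbE prob_compl (@prob_ext _ _ _ (fun d =>
  gamma < Rabs (rand_sum Us U m i q d - col_inner U Us q ^ 2))); last first.
  by move=> d; split; [move/Rnot_le_lt | move/Rlt_not_le].
apply: Rle_ge; apply: Rplus_le_compat_l; apply: Ropp_le_contravar.
apply: Rle_trans (rand_sum_tail i q HUs HU HUinc m0 (conj g0 _)) _; first lra.
apply: Rle_trans (two_exp_neg_12ln_le n2).
by apply: Rmult_le_compat_l; [lra | apply: exp_le; apply: Ropp_le_contravar].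
Qed.
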